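(* Fix a set $A$, a set $V(A)$ of ''objects'', a binary relation $\trianglelefteq$ on objects, and a binary relation $\sqsubset$ on objects (with reflexive closure $\sqsubseteq$) satisfying: (i) if $x \trianglelefteq y$ and $y \sqsubset z$ then $x \trianglelefteq z$; (ii) $\sqsubset$ is well-founded on $V(A)$, i.e., there is no sequence $f$ with $f(i)\in V(A)$ and $f(i+1)\sqsubset f(i)$ for all $i$; (iii) $\sqsubset$ is transitive; (iv) if $x \sqsubset y$ and $y \in V(A)$ then $x \in V(A)$. Let $f:\mathbb{N}\to$ objects with $f(0)\in V(A)$ and $f$ bad w.r.t. $\trianglelefteq$. Then there exists a sequence $g$ such that for every $i$ there is $j$ with $g(i)\sqsubseteq f(j)$, $g$ is minimal at $0$, and $g$ is bad w.r.t. $\trianglelefteq$.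
   Context: Sequences are functions $\mathbb{N}\to$ objects. A sequence $h$ is good w.r.t. $\trianglelefteq$ if there are $i<j$ with $h(i)\trianglelefteq h(j)$, and bad otherwise. A sequence $f$ is minimal at $n$ if for every sequence $g$ such that $g(i)=f(i)$ for all $i<n$, $g(n)\sqsubset f(n)$, and for every $i\ge n$ there exists $j\ge n$ with $g(i)\sqsubseteq f(j)$, the sequence $g$ is good w.r.t. $\trianglelefteq$. *)

From Stdlib Require Import Arith.

Definition rclos {T : Type} (sq : T -> T -> Prop) (x y : T) : Prop :=
  sq x y \/ x = y.

Definition good {T : Type} (le : T -> T -> Prop) (h : nat -> T) : Prop :=
  exists i j, i < j /\ le (h i) (h j).

Definition bad {T : Type} (le : T -> T -> Prop) (h : nat -> T) : Prop :=
  ~ good le h.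

Definition minimal_at {T : Type} (le sq : T -> T -> Prop)
    (f : nat -> T) (n : nat) : Prop :=
  forall g : nat -> T,
    (forall i, i < n -> g i = f i) ->
    sq (g n) (f n) ->
    (forall i, n <= i -> exists j, n <= j /\ rclos sq (g i) (f j)) ->
    good le g.

From Stdlib Require Import Arith Classical ClassicalEpsilon.

(* Among all bad sequences in V(A) that are covered by f, take one whose head is
   sqsubset-minimal; such a head exists because sqsubset has no infinite
   descending chain in V(A).  A bad sequence g' with a strictly smaller head that
   is covered by g would be covered by f as well, contradicting that choice, so
   g is minimal at 0. *)

Section DescendingChains.

Variables (T : Type) (sq : T -> T -> Prop).

Lemma descending_chain_of_no_minimal (P : T -> Prop) (x0 : T) :
  P x0 -> (forall x, P x -> exists y, P y /\ sq y x) ->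
  exists f : nat -> T, forall i, P (f i) /\ sq (f (S i)) (f i).
Proof.
  intros Px0 Hbelow.
  set (next := fun x => epsilon (inhabits x0) (fun y => P y /\ sq y x)).
  assert (Hnext : forall x, P x -> P (next x) /\ sq (next x) x).
  { intros x Px. exact (epsilon_spec _ _ (Hbelow x Px)). }
  assert (HP : forall n, P (Nat.iter n next x0)).
  { induction n as [|n IH]; [exact Px0|]. exact (proj1 (Hnext _ IH)). }
  exists (fun n => Nat.iter n next x0). intro i.
  split; [apply HP|]. exact (proj2 (Hnext _ (HP i))).
Qed.

Lemma exists_minimal_of_no_descending_chain (V P : T -> Prop) (x0 : T) :
  ~ (exists f : nat -> T, forall i, V (f i) /\ sq (f (S i)) (f i)) ->
  (forall x, P x -> V x) -> P x0 ->
  exists x, P x /\ forall y, P y -> ~ sq y x.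
Proof.
  intros Hwf HPV Px0. apply NNPP; intro Hnomin.
  apply Hwf.
  destruct (descending_chain_of_no_minimal P x0 Px0) as [f Hf].
  - intros x Px. apply NNPP; intro Hnone.
    apply Hnomin. exists x. split; [exact Px|].
    intros y Py Hyx. apply Hnone. exists y. split; assumption.
  - exists f. intro i. destruct (Hf i) as [Pfi Hdesc]. split; auto.
Qed.

End DescendingChains.

Definition covered_by {T : Type} (sq : T -> T -> Prop) (g f : nat -> T) : Prop :=
  forall i, exists j, rclos sq (g i) (f j).

Lemma rclos_trans {T : Type} (sq : T -> T -> Prop) :
  (forall x y z, sq x y -> sq y z -> sq x z) ->
  forall x y z, rclos sq x y -> rclos sq y z -> rclos sq x z.
Proof.
  intros Htrans x y z [Hxy|<-] [Hyz|<-]; unfold rclos; eauto.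
Qed.

Lemma covered_by_trans {T : Type} (sq : T -> T -> Prop) (h g f : nat -> T) :
  (forall x y z, sq x y -> sq y z -> sq x z) ->
  covered_by sq h g -> covered_by sq g f -> covered_by sq h f.
Proof.
  intros Htrans Hhg Hgf i.
  destruct (Hhg i) as [j Hj]. destruct (Hgf j) as [k Hk].
  exists k. exact (rclos_trans sq Htrans _ _ _ Hj Hk).
Qed.

Lemma covered_by_refl {T : Type} (sq : T -> T -> Prop) (f : nat -> T) :
  covered_by sq f f.
Proof. intro i. exists i. now right. Qed.

Lemma covered_by_of_covered_from_0 {T : Type} (sq : T -> T -> Prop)
    (g' g : nat -> T) :
  (forall i, 0 <= i -> exists j, 0 <= j /\ rclos sq (g' i) (g j)) ->
  covered_by sq g' g.
Proof.
  intros Hcov i. destruct (Hcov i (Nat.le_0_l i)) as [j [_ Hj]]. now exists j.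
Qed.

Theorem lemma5 (T : Type) (V : T -> Prop) (le sq : T -> T -> Prop)
  (H1 : forall x y z, le x y -> sq y z -> le x z)
  (H2 : ~ exists f : nat -> T, forall i, V (f i) /\ sq (f (S i)) (f i))
  (H3 : forall x y z, sq x y -> sq y z -> sq x z)
  (H4 : forall x y, sq x y -> V y -> V x)
  (f : nat -> T) (Hf0 : V (f 0)) (Hbad : bad le f) :
  exists g : nat -> T,
    (forall i, exists j, rclos sq (g i) (f j)) /\
    minimal_at le sq g 0 /\
    bad le g.
Proof.
  set (bad_head := fun x => V x /\
         exists h, h 0 = x /\ bad le h /\ covered_by sq h f).
  destruct (exists_minimal_of_no_descending_chain T sq V bad_head (f 0) H2)
    as [x [[Vx [g [<- [Hgbad Hgf]]]] Hxmin]].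
  - intros x Hx. exact (proj1 Hx).
  - split; [exact Hf0|]. exists f. split; [reflexivity|].
    split; [exact Hbad|]. apply covered_by_refl.
  - exists g. split; [exact Hgf|]. split; [|exact Hgbad].
    intros g' _ Hhead Hcov. apply NNPP; intro Hg'bad.
    apply (Hxmin (g' 0)); [|exact Hhead].
    split; [exact (H4 _ _ Hhead Vx)|].
    exists g'. split; [reflexivity|]. split; [exact Hg'bad|].
    apply (covered_by_trans sq g' g f H3); [|exact Hgf].
    exact (covered_by_of_covered_from_0 sq g' g Hcov).
Qed.
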